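(* Let $V+Z\in\mathfrak v\oplus\mathfrak z$ with $Z=Z_c$ satisfy the genericity condition ($|c|>|c_k|>0$ and $V_{c_k}\neq0$, $V_{|c|}\neq0$, $V_0\neq0$). Let $\gamma:\mathbb R\to N$ (resp. $N'$) be a geodesic with $\dot\gamma(0)=((v,z),V+Z)$, let $\tau>0$, and assume $\dot\gamma(\tau)=(\gamma(\tau),V+Z)$. Write $V_0=\beta Y(Z)$, $V_\perp:=V_{c_k}+V_{|c|}=\sum_{m=1}^4\alpha_mE_m(Z)$ in the case of $N$ (resp. $=\sum_{m=1}^4\alpha'_mE'_m(Z)$ in the case of $N'$), and $v=x_iX_i+x_jX_j+y_iY_i+y_jY_j+y_kY_k$. Then $\tau c_k\in2\pi\mathbb Z$, $\tau|c|\in2\pi\mathbb Z$, and the translational element $a:=\gamma(\tau)\gamma(0)^{-1}$ equals, in $N$, $$\Bigl(\tau V_0,\ \tau\bigl(1+\tfrac{|V_\perp|^2}{2|c|^2}\bigr)Z_c+\tau\beta\bigl(\alpha_2-\tfrac{c_k}{c_i^2+c_j^2}(x_ic_i+x_jc_j)\bigr)(-c_jZ_i+c_iZ_j)+\tau\Bigl(-\tfrac{|V_{c_k}|^2}{2c_k|c|^2}+\beta\bigl(\alpha_4-\tfrac{1}{c_i^2+c_j^2}(x_ic_j-x_jc_i)\bigr)\Bigr)\bigl(c_k(c_iZ_i+c_jZ_j)-(c_i^2+c_j^2)Z_k\bigr)\Bigr),$$ and, in $N'$, $$\Bigl(\tau V_0,\ \tau\bigl(1+\tfrac{|V_\pe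rp|^2}{2|c|^2}\bigr)Z_c+\tau\beta\bigl(-|c|\alpha'_3+y_k-\tfrac{c_k}{c_i^2+c_j^2}(y_ic_i+y_jc_j)\bigr)(-c_jZ_i+c_iZ_j)+\tau\Bigl(-\tfrac{|V_{c_k}|^2}{2c_k|c|^2}+\beta\bigl(\alpha'_4-\tfrac{1}{c_i^2+c_j^2}(y_ic_j-y_jc_i)\bigr)\Bigr)\bigl(c_k(c_iZ_i+c_jZ_j)-(c_i^2+c_j^2)Z_k\bigr)\Bigr).$$
   Context: $\mathfrak v$ has orthonormal basis $X_i,X_j,Y_i,Y_j,Y_k$, $\mathfrak z$ orthonormal basis $Z_i,Z_j,Z_k$; on the orthogonal sum $\mathfrak v\oplus\mathfrak z$ two two-step nilpotent brackets ($\mathfrak z$ central, $[\mathfrak v,\mathfrak v]\subseteq\mathfrak z$) are given: $[\,,]$ with only nonzero basis brackets (up to antisymmetry) $[X_i,Y_j]=Z_k$, $[X_i,Y_k]=-Z_j$, $[X_j,Y_i]=-Z_k$, $[X_j,Y_k]=Z_i$; and $[\,,]'$ with $[X_i,X_j]'=Z_k$, $[Y_i,Y_j]'=Z_k$, $[Y_j,Y_k]'=Z_i$, $[Y_k,Y_i]'=Z_j$. $j,j':\mathfrak z\to\mathfrak{so}(\mathfrak v)$ are defined by $\langle j(Z)X,Y\rangle=\langle Z,[X,Y]\rangle$ and similarly for $j'$. $N,N'$ are the corresponding simply connected Lie groups with left invariant metrics $g,g'$ given by the inner product. Elements are written $(v,z):=\exp(v+z)$, with $(v,z)(\bar v,\bar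 z)=(v+\bar v,z+\bar z+\tfrac12[v,\bar v])$ (resp. $[\,,]'$); tangent vectors are written $(p,A)$ with $A=L_{p*}^{-1}X\in\mathfrak v\oplus\mathfrak z$. For $Z=Z_c=c_iZ_i+c_jZ_j+c_kZ_k$ and $V\in\mathfrak v$, $V_\lambda$ denotes the component of $V$ in the $(-\lambda^2)$-eigenspace of $j(Z)^2$ (resp. $j'(Z)^2$), so $V=V_{c_k}+V_{|c|}+V_0$ when $|c|>|c_k|>0$. Set $Y(Z)=c_iY_i+c_jY_j+c_kY_k$; $E_1(Z)=c_iX_i+c_jX_j$, $E_2(Z)=-c_jY_i+c_iY_j$, $E_3(Z)=|c|(c_jX_i-c_iX_j)$, $E_4(Z)=c_k(c_iY_i+c_jY_j)-(c_i^2+c_j^2)Y_k$; $E'_1(Z)=X_i$, $E'_2(Z)=X_j$, $E'_3(Z)=|c|(c_jY_i-c_iY_j)$, $E'_4(Z)=c_k(c_iY_i+c_jY_j)-(c_i^2+c_j^2)Y_k$. *)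

From HB Require Import structures.
From mathcomp Require Import all_boot all_order all_algebra.
From mathcomp Require Import all_classical all_reals all_analysis.
Set Implicit Arguments. Unset Strict Implicit. Unset Printing Implicit Defensive.
Import Order.TTheory GRing.Theory Num.Theory.
Local Open Scope ring_scope.

Section Defs.
Variable R : realType.

Definition Xi : 'rV[R]_5 := delta_mx 0 (inord 0).
Definition Xj : 'rV[R]_5 := delta_mx 0 (inord 1).
Definition Yi : 'rV[R]_5 := delta_mx 0 (inord 2).
Definition Yj : 'rV[R]_5 := delta_mx 0 (inord 3).
Definition Yk : 'rV[R]_5 := delta_mx 0 (inord 4).
Definition Zi : 'rV[R]_3 := delta_mx 0 (inord 0).
Definition Zj : 'rV[R]_3 := delta_mx 0 (inord 1).
Definition Zk : 'rV[R]_3 := delta_mx 0 (inord 2).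

(* standard inner product on row vectors (the basis above is orthonormal) *)
Definition dot n (a b : 'rV[R]_n) : R := \sum_(i < n) a 0 i * b 0 i.

Definition bbN (a b : 'I_5) : 'rV[R]_3 :=
  match val a, val b with
  | 0, 3 => Zk | 3, 0 => - Zk     (* [X_i,Y_j] = Z_k *)
  | 0, 4 => - Zj | 4, 0 => Zj     (* [X_i,Y_k] = -Z_j *)
  | 1, 2 => - Zk | 2, 1 => Zk     (* [X_j,Y_i] = -Z_k *)
  | 1, 4 => Zi | 4, 1 => - Zi     (* [X_j,Y_k] = Z_i *)
  | _, _ => 0
  end.

Definition bbN' (a b : 'I_5) : 'rV[R]_3 :=
  match val a, val b with
  | 0, 1 => Zk | 1, 0 => - Zk     (* [X_i,X_j]' = Z_k *)
  | 2, 3 => Zk | 3, 2 => - Zk     (* [Y_i,Y_j]' = Z_k *)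
  | 3, 4 => Zi | 4, 3 => - Zi     (* [Y_j,Y_k]' = Z_i *)
  | 4, 2 => Zj | 2, 4 => - Zj     (* [Y_k,Y_i]' = Z_j *)
  | _, _ => 0
  end.

Definition brOf (bb : 'I_5 -> 'I_5 -> 'rV[R]_3) (v w : 'rV[R]_5) : 'rV[R]_3 :=
  \sum_(a < 5) \sum_(b < 5) (v 0 a * w 0 b) *: bb a b.

Definition brN := brOf bbN.
Definition brN' := brOf bbN'.

Definition jmap (br : 'rV[R]_5 -> 'rV[R]_5 -> 'rV[R]_3) (Z : 'rV[R]_3)
  (x : 'rV[R]_5) : 'rV[R]_5 := \row_(w < 5) dot Z (br x (delta_mx 0 w)).

Definition nalg := ('rV[R]_5 * 'rV[R]_3)%type.
Definition nadd (X Y : nalg) : nalg := (X.1 + Y.1, X.2 + Y.2).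
Definition lie br (X Y : nalg) : nalg := (0, br X.1 Y.1).
Definition ip (X Y : nalg) : R := dot X.1 Y.1 + dot X.2 Y.2.
Definition koszul br (X Y W : nalg) : R :=
  2^-1 * (ip (lie br X Y) W - ip (lie br Y W) X + ip (lie br W X) Y).
Definition nabla br (X Y : nalg) : nalg :=
  (\row_(u < 5) koszul br X Y (delta_mx 0 u, 0),
   \row_(r < 3) koszul br X Y (0, delta_mx 0 r)).

Definition gmul br (p q : nalg) : nalg := (p.1 + q.1, p.2 + q.2 + 2^-1 *: br p.1 q.1).
Definition ginv (p : nalg) : nalg := (- p.1, - p.2).

(* curves in exponential coordinates *)
Definition coordf n (f : R -> 'rV[R]_n) (u : 'I_n) : R -> R := fun s => f s 0 u.
Definition C1curve n (f : R -> 'rV[R]_n) : Prop :=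
  forall (u : 'I_n) (t : R), derivable (coordf f u) t 1.
Definition dcurve n (f : R -> 'rV[R]_n) (t : R) : 'rV[R]_n :=
  \row_(u < n) derive1 (coordf f u) t.

(* left-trivialized velocity A(t) = L_{gamma(t)*}^{-1} gamma'(t) *)
Definition ltv br (gv : R -> 'rV[R]_5) (gz : R -> 'rV[R]_3) (t : R) : nalg :=
  (dcurve gv t, dcurve gz t - 2^-1 *: br (gv t) (dcurve gv t)).

(* geodesic of the left-invariant metric: nabla_{gamma'} gamma' = 0, i.e.
   A'(t) + nabla_{A(t)} A(t) = 0 in the left-invariant orthonormal frame *)
Definition geodesic br (gv : R -> 'rV[R]_5) (gz : R -> 'rV[R]_3) : Prop :=
  [/\ C1curve gv, C1curve gz,
      C1curve (fun t => (ltv br gv gz t).1),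
      C1curve (fun t => (ltv br gv gz t).2) &
      forall t, nadd (dcurve (fun s => (ltv br gv gz s).1) t,
                      dcurve (fun s => (ltv br gv gz s).2) t)
                     (nabla br (ltv br gv gz t) (ltv br gv gz t)) = (0, 0)].

Definition Zc (ci cj ck : R) : 'rV[R]_3 := ci *: Zi + cj *: Zj + ck *: Zk.
Definition cnorm (ci cj ck : R) : R := Num.sqrt (ci ^+ 2 + cj ^+ 2 + ck ^+ 2).
Definition YZ (ci cj ck : R) : 'rV[R]_5 := ci *: Yi + cj *: Yj + ck *: Yk.
Definition E1 (ci cj ck : R) : 'rV[R]_5 := ci *: Xi + cj *: Xj.
Definition E2 (ci cj ck : R) : 'rV[R]_5 := - cj *: Yi + ci *: Yj.
Definition E3 (ci cj ck : R) : 'rV[R]_5 := cnorm ci cj ck *: (cj *: Xi - ci *: Xj).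
Definition E4 (ci cj ck : R) : 'rV[R]_5 :=
  ck *: (ci *: Yi + cj *: Yj) - (ci ^+ 2 + cj ^+ 2) *: Yk.
Definition E1' (ci cj ck : R) : 'rV[R]_5 := Xi.
Definition E2' (ci cj ck : R) : 'rV[R]_5 := Xj.
Definition E3' (ci cj ck : R) : 'rV[R]_5 := cnorm ci cj ck *: (cj *: Yi - ci *: Yj).
Definition E4' (ci cj ck : R) : 'rV[R]_5 :=
  ck *: (ci *: Yi + cj *: Yj) - (ci ^+ 2 + cj ^+ 2) *: Yk.

(* genericity: |c| > |c_k| > 0 and V = V_{c_k} + V_{|c|} + V_0 with V_lam in
   the (-lam^2)-eigenspace of j(Z)^2, all three nonzero *)
Definition eigcomp br (Z : 'rV[R]_3) (lam : R) (W : 'rV[R]_5) : Prop :=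
  jmap br Z (jmap br Z W) = - (lam ^+ 2) *: W.

End Defs.
Arguments Xi {R}. Arguments Xj {R}. Arguments Yi {R}. Arguments Yj {R}.
Arguments Yk {R}. Arguments Zi {R}. Arguments Zj {R}. Arguments Zk {R}.
Arguments brN {R}. Arguments brN' {R}. Arguments bbN {R}. Arguments bbN' {R}.

From HB Require Import structures.
From mathcomp Require Import all_boot all_order all_algebra.
From mathcomp Require Import all_classical all_reals all_analysis.
From mathcomp Require Import ring lra.
Set Implicit Arguments. Unset Strict Implicit. Unset Printing Implicit Defensive.
Import Order.TTheory GRing.Theory Num.Theory.
Local Open Scope ring_scope.

(* Along a geodesic the left-trivialized velocity (A, Z) keeps Z fixed, and A solves
   A' = j(Z) A with j(Z) skew-adjoint, so A is determined by A(0): the distance between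
   two solutions is constant. Splitting A(0) into eigenvectors of j(Z)^2 gives
   A(s) = jrot ck Vck s + jrot |c| Vc s + V0, with jrot k x s = cos(ks) x + sin(ks)/k j(Z) x.
   The eigenspaces are orthogonal, so A(tau) = A(0) forces cos(ck tau) = cos(|c| tau) = 1.
   Everything then integrates in closed form: K w = - j(Z) w / k^2 is an antiderivative of
   the rotating curve w = jrot k x, [K w, w] is constant along it, and the mixed brackets
   have an explicit antiderivative. At a period the oscillating terms cancel, which gives,
   for every two-step bracket,
     gamma(tau) gamma(0)^-1 = (tau V0, tau (Z + [v - K Vck - K Vc, V0]
                                          + ([K Vck, Vck] + [K Vc, Vc]) / 2)).
   For N and N' it remains to evaluate this in coordinates. *)

Section Dot.
Variables (R : realType) (n : nat).
Implicit Types x y z : 'rV[R]_n.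

Lemma dotC x y : dot x y = dot y x.
Proof. by apply: eq_bigr => i _; rewrite mulrC. Qed.
Lemma dotDl x y z : dot (x + y) z = dot x z + dot y z.
Proof. by rewrite /dot -big_split; apply: eq_bigr => i _; rewrite mxE mulrDl. Qed.
Lemma dotZl a x y : dot (a *: x) y = a * dot x y.
Proof. by rewrite /dot mulr_sumr; apply: eq_bigr => i _; rewrite mxE mulrA. Qed.
Lemma dotDr x y z : dot x (y + z) = dot x y + dot x z.
Proof. by rewrite dotC dotDl !(dotC x). Qed.
Lemma dotZr a x y : dot x (a *: y) = a * dot x y.
Proof. by rewrite dotC dotZl dotC. Qed.
Lemma dot0r x : dot x 0 = 0.
Proof. by rewrite -(scale0r (0 : 'rV_n)) dotZr mul0r. Qed.
Lemma dot0l x : dot 0 x = 0.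
Proof. by rewrite dotC dot0r. Qed.
Lemma dotNr x y : dot x (- y) = - dot x y.
Proof. by rewrite -scaleN1r dotZr mulN1r. Qed.
Lemma dotNl x y : dot (- x) y = - dot x y.
Proof. by rewrite dotC dotNr dotC. Qed.
Lemma dotxx_eq0 x : (dot x x == 0) = (x == 0).
Proof.
apply/idP/eqP => [|->]; last by rewrite dot0r.
rewrite /dot psumr_eq0 => [/allP x0|i _]; last by rewrite -expr2 sqr_ge0.
apply/rowP => i; rewrite mxE; have /implyP := x0 i (mem_index_enum _).
by rewrite mulf_eq0 orbb => /(_ isT) /eqP.
Qed.
End Dot.

Section Bracket.
Variables (R : realType) (bb : 'I_5 -> 'I_5 -> 'rV[R]_3).
Local Notation br := (brOf bb).
Implicit Types x y w : 'rV[R]_5.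

Lemma brOfDl x y w : br (x + y) w = br x w + br y w.
Proof.
rewrite /brOf -big_split; apply: eq_bigr => a _; rewrite -big_split.
by apply: eq_bigr => b _; rewrite mxE mulrDl scalerDl.
Qed.
Lemma brOfDr x y w : br w (x + y) = br w x + br w y.
Proof.
rewrite /brOf -big_split; apply: eq_bigr => a _; rewrite -big_split.
by apply: eq_bigr => b _; rewrite mxE mulrDr scalerDl.
Qed.
Lemma brOfZl c x w : br (c *: x) w = c *: br x w.
Proof.
rewrite /brOf scaler_sumr; apply: eq_bigr => a _; rewrite scaler_sumr.
by apply: eq_bigr => b _; rewrite mxE scalerA mulrA.
Qed.
Lemma brOfZr c x w : br w (c *: x) = c *: br w x.
Proof.
rewrite /brOf scaler_sumr; apply: eq_bigr => a _; rewrite scaler_sumr.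
by apply: eq_bigr => b _; rewrite mxE scalerA mulrCA.
Qed.
Lemma brOf0l x : br 0 x = 0.
Proof. by rewrite -(scale0r 0) brOfZl scale0r. Qed.
Lemma brOf0r x : br x 0 = 0.
Proof. by rewrite -(scale0r 0) brOfZr scale0r. Qed.
Lemma brOfNl x y : br (- x) y = - br x y.
Proof. by rewrite -scaleN1r brOfZl scaleN1r. Qed.
Lemma brOfNr x y : br x (- y) = - br x y.
Proof. by rewrite -scaleN1r brOfZr scaleN1r. Qed.

Section Jmap.
Variable Z : 'rV[R]_3.
Local Notation j := (jmap br Z).

Lemma jmapD x y : j (x + y) = j x + j y.
Proof. by apply/rowP => u; rewrite !mxE brOfDl dotDr. Qed.
Lemma jmapZ c x : j (c *: x) = c *: j x.
Proof. by apply/rowP => u; rewrite !mxE brOfZl dotZr. Qed.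
Lemma jmapN x : j (- x) = - j x.
Proof. by rewrite -scaleN1r jmapZ scaleN1r. Qed.
Lemma jmapB x y : j (x - y) = j x - j y.
Proof. by rewrite jmapD jmapN. Qed.

Lemma dot_jmap x y : dot (j x) y = dot Z (br x y).
Proof.
rewrite {2}(row_sum_delta y) /dot.
apply: (big_ind2 (fun (c : R) (v : 'rV_5) => c = \sum_(r < 3) Z 0 r * br x v 0 r)).
- by rewrite brOf0r; under eq_bigr do rewrite mxE mulr0; rewrite big1.
- by move=> ? ? v1 v2 -> ->; rewrite brOfDr -big_split; apply: eq_bigr => r _; rewrite mxE mulrDr.
- move=> u _; rewrite brOfZr mxE mulrC mulr_sumr; apply: eq_bigr => r _.
  by rewrite mxE mulrCA.
Qed.
End Jmap.

Hypothesis bbC : forall a b, bb a b = - bb b a.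

Lemma brOfC x y : br x y = - br y x.
Proof.
rewrite /brOf exchange_big -sumrN; apply: eq_bigr => b _; rewrite -sumrN.
by apply: eq_bigr => a _; rewrite bbC scalerN mulrC.
Qed.
Lemma brOfxx x : br x x = 0.
Proof.
apply/eqP; have /eqP := brOfC x x.
by rewrite -addr_eq0 -mulr2n -scaler_nat scaler_eq0 pnatr_eq0.
Qed.

Section SkewJmap.
Variable Z : 'rV[R]_3.
Local Notation j := (jmap br Z).

Lemma dot_jmapC x y : dot (j x) y = - dot x (j y).
Proof. by rewrite dot_jmap brOfC dotNr -dot_jmap dotC. Qed.
Lemma dot_jmapxx x : dot (j x) x = 0.
Proof. by rewrite dot_jmap brOfxx dot0r. Qed.

End SkewJmap.

Lemma nabla_diag x z : nabla br (x, z) (x, z) = (- jmap br z x, 0).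
Proof.
rewrite /nabla /koszul /ip /lie /=; congr pair; apply/rowP => u; rewrite !mxE.
- by rewrite brOfxx !dot0l (brOfC (delta_mx 0 u)) dotNl (dotC z); field.
- by rewrite brOfxx brOf0r brOf0l !dot0l; field.
Qed.
End Bracket.

Section ScalarDerivative.
Variable R : realType.
Implicit Types (f g : R -> R) (t df dg c : R).

Lemma is_derive_mul f g t df dg : is_derive t 1 f df -> is_derive t 1 g dg ->
  is_derive t 1 (fun s => f s * g s) (df * g t + f t * dg).
Proof.
move=> Hf Hg; have := @is_deriveM _ _ f g t 1 df dg Hf Hg.
by rewrite addrC [_ *: _]mulrC.
Qed.

Lemma is_derive_sumr n (F : 'I_n -> R -> R) (dF : 'I_n -> R) t :
  (forall i, is_derive t 1 (F i) (dF i)) ->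
  is_derive t 1 (fun s => \sum_i F i s) (\sum_i dF i).
Proof.
move=> H; rewrite (_ : (fun s => _) = \sum_i F i); first exact: is_derive_sum.
by apply/funext => s; rewrite fct_sumE.
Qed.

Lemma is_derive_scale c t : is_derive t 1 (fun s => c * s) c.
Proof.
have := is_derive_mul (is_derive_cst c t 1) (is_derive_id t 1).
by rewrite mul0r add0r mulr1.
Qed.
Lemma is_derive_cos_scale c t : is_derive t 1 (fun s => cos (c * s)) (- sin (c * t) * c).
Proof. exact: (is_derive1_comp (is_derive_cos _) (is_derive_scale c t)). Qed.
Lemma is_derive_sin_scale c t : is_derive t 1 (fun s => sin (c * s)) (cos (c * t) * c).
Proof. exact: (is_derive1_comp (is_derive_sin _) (is_derive_scale c t)). Qed.
End ScalarDerivative.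

Section VectorDerivative.
Variable R : realType.

Definition is_vderiv n (f df : R -> 'rV[R]_n) :=
  forall (t : R) (u : 'I_n), is_derive t 1 (fun s => f s 0 u) (df t 0 u).

Lemma C1curve_vderiv n (f : R -> 'rV[R]_n) : C1curve f -> is_vderiv f (dcurve f).
Proof. by move=> Hf t u; rewrite /dcurve mxE derive1E; exact: derivableP (Hf u t). Qed.

Lemma is_vderiv_eq n (f df dg : R -> 'rV[R]_n) :
  is_vderiv f df -> (forall t, df t = dg t) -> is_vderiv f dg.
Proof. by move=> Hf e t u; rewrite -e. Qed.

Lemma is_vderiv_cst n (x : 'rV[R]_n) : is_vderiv (fun _ => x) (fun _ => 0).
Proof. by move=> t u; rewrite mxE; apply: is_derive_cst. Qed.

Lemma is_vderivD n (f g df dg : R -> 'rV[R]_n) : is_vderiv f df -> is_vderiv g dg ->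
  is_vderiv (fun s => f s + g s) (fun s => df s + dg s).
Proof.
move=> Hf Hg t u; rewrite mxE; under [fun s => _]funext do rewrite mxE.
exact: is_deriveD.
Qed.

Lemma is_vderivN n (f df : R -> 'rV[R]_n) : is_vderiv f df ->
  is_vderiv (fun s => - f s) (fun s => - df s).
Proof.
move=> Hf t u; rewrite mxE; under [fun s => _]funext do rewrite mxE.
exact: is_deriveN.
Qed.

Lemma is_vderivB n (f g df dg : R -> 'rV[R]_n) : is_vderiv f df -> is_vderiv g dg ->
  is_vderiv (fun s => f s - g s) (fun s => df s - dg s).
Proof. by move=> Hf Hg; apply: is_vderivD (is_vderivN Hg). Qed.

Lemma is_vderivZ n (a da : R -> R) (f df : R -> 'rV[R]_n) :
  (forall t : R, is_derive t 1 a (da t)) -> is_vderiv f df ->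
  is_vderiv (fun s => a s *: f s) (fun s => da s *: f s + a s *: df s).
Proof.
move=> Ha Hf t u; rewrite !mxE; under [fun s => _]funext do rewrite mxE.
exact: is_derive_mul.
Qed.

Lemma is_vderivZr n c (f df : R -> 'rV[R]_n) : is_vderiv f df ->
  is_vderiv (fun s => c *: f s) (fun s => c *: df s).
Proof.
move=> Hf t u; rewrite mxE; under [fun s => _]funext do rewrite mxE.
have := is_derive_mul (is_derive_cst c t 1) (Hf t u).
by move/is_derive_eq; apply; rewrite mul0r add0r.
Qed.

Lemma is_vderiv_idZ n (f df : R -> 'rV[R]_n) : is_vderiv f df ->
  is_vderiv (fun s => s *: f s) (fun s => f s + s *: df s).
Proof.
move=> Hf; apply: is_vderiv_eq; first exact: is_vderivZ (fun t => is_derive_id t 1) Hf.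
by move=> t /=; rewrite scale1r.
Qed.

Lemma is_vderiv_line n (x : 'rV[R]_n) : is_vderiv (fun s => s *: x) (fun _ => x).
Proof.
apply: is_vderiv_eq; first exact: is_vderiv_idZ (is_vderiv_cst x).
by move=> t /=; rewrite scaler0 addr0.
Qed.

Lemma is_vderiv_br bb (f g df dg : R -> 'rV[R]_5) : is_vderiv f df -> is_vderiv g dg ->
  is_vderiv (fun s => brOf bb (f s) (g s))
            (fun s => brOf bb (df s) (g s) + brOf bb (f s) (dg s)).
Proof.
have brE x y r : brOf bb x y 0 r = \sum_a \sum_b x 0 a * y 0 b * bb a b 0 r.
  rewrite summxE; apply: eq_bigr => a _.
  by rewrite summxE; apply: eq_bigr => b _; rewrite mxE.
move=> Hf Hg t r; under [fun s => _]funext do rewrite brE.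
rewrite mxE !brE -big_split; apply: is_derive_sumr => a; rewrite /= -big_split.
apply: is_derive_sumr => b.
have := is_derive_mul (is_derive_mul (Hf t a) (Hg t b)) (is_derive_cst (bb a b 0 r) t 1).
by move/is_derive_eq; apply; rewrite /=; ring.
Qed.

Lemma is_vderiv_dot n (f g df dg : R -> 'rV[R]_n) (t : R) :
  is_vderiv f df -> is_vderiv g dg ->
  is_derive t 1 (fun s => dot (f s) (g s)) (dot (df t) (g t) + dot (f t) (dg t)).
Proof.
move=> Hf Hg; rewrite /dot -big_split; apply: is_derive_sumr => u.
by apply: is_derive_eq; [exact: is_derive_mul | rewrite /=; ring].
Qed.

Lemma is_vderiv_jmap bb (Z : 'rV[R]_3) (f df : R -> 'rV[R]_5) : is_vderiv f df ->
  is_vderiv (fun s => jmap (brOf bb) Z (f s)) (fun s => jmap (brOf bb) Z (df s)).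
Proof.
move=> Hf t u; under [fun s => _]funext do rewrite mxE.
apply: is_derive_eq; first apply: is_vderiv_dot (is_vderiv_cst Z)
  (is_vderiv_br bb Hf (is_vderiv_cst (delta_mx 0 u))).
by rewrite mxE dot0l brOf0r addr0 add0r.
Qed.

Lemma is_vderiv0_cst n (f : R -> 'rV[R]_n) : is_vderiv f (fun _ => 0) ->
  forall s, f s = f 0.
Proof.
move=> Hf s; apply/rowP => u; apply: (@is_derive_0_is_cst _ (fun s => f s 0 u)) => t.
by have := Hf t u; rewrite mxE.
Qed.
End VectorDerivative.

Section SkewFlow.
Variables (R : realType) (bb : 'I_5 -> 'I_5 -> 'rV[R]_3).
Hypothesis bbC : forall a b, bb a b = - bb b a.
Variable Z : 'rV[R]_3.
Local Notation br := (brOf bb).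
Local Notation j := (jmap br Z).
Local Notation eig := (eigcomp br Z).
Implicit Types (k l : R) (x y : 'rV[R]_5).

Lemma eigcompB k x y : eig k x -> eig k y -> eig k (x - y).
Proof. by rewrite /eigcomp !jmapD !jmapN => -> ->; rewrite scalerBr. Qed.

Lemma eigcomp_jmap k x : eig k x -> eig k (j x).
Proof. by rewrite /eigcomp => Ex; rewrite Ex jmapZ. Qed.

Lemma eigcomp_eq0 k l x : k ^+ 2 != l ^+ 2 -> eig k x -> eig l x -> x = 0.
Proof.
rewrite /eigcomp => kl -> /eqP; rewrite -subr_eq0 -scalerBl scaler_eq0 => /orP[|/eqP //].
by rewrite opprK addrC subr_eq0 eq_sym (negPf kl).
Qed.

Lemma dot_eigcomp k l x y : k ^+ 2 != l ^+ 2 -> eig k x -> eig l y -> dot x y = 0.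
Proof.
move=> kl Ex Ey; have : dot (j (j x)) y = dot x (j (j y)).
  by rewrite (dot_jmapC bbC) (dot_jmapC bbC Z x) opprK.
rewrite Ex Ey dotZl dotZr => /eqP; rewrite -subr_eq0 -mulrBl mulf_eq0 => /orP[|/eqP //].
by rewrite opprK addrC subr_eq0 eq_sym (negPf kl).
Qed.

Lemma eigcomp_split k l x y x' y' : k ^+ 2 != l ^+ 2 ->
  eig k x -> eig l y -> eig k x' -> eig l y' -> x + y = x' + y' -> x = x' /\ y = y'.
Proof.
move=> kl Ex Ey Ex' Ey' e.
have d : x - x' = y' - y by apply/rowP => u; move/rowP/(_ u): e; rewrite !mxE => e; lra.
have /eqP : x - x' = 0 by apply: (eigcomp_eq0 kl (eigcompB Ex Ex')); rewrite d; exact: eigcompB.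
by rewrite subr_eq0 => /eqP xx; split=> //; apply: (addrI x); rewrite e xx.
Qed.

Lemma eigcomp0_jmap x : eig 0 x -> j x = 0.
Proof.
move=> Ex; apply/eqP; rewrite -dotxx_eq0 dot_jmapC // Ex.
by rewrite expr0n /= oppr0 scale0r dot0r oppr0.
Qed.
Lemma skew_flow_eq0 (D : R -> 'rV[R]_5) :
  is_vderiv D (fun s => j (D s)) -> D 0 = 0 -> forall s, D s = 0.
Proof.
move=> HD D0 s; apply/eqP; rewrite -dotxx_eq0.
suff -> : dot (D s) (D s) = dot (D 0) (D 0) by rewrite D0 dot0r.
apply: (@is_derive_0_is_cst _ (fun s => dot (D s) (D s))) => t.
apply: is_derive_eq; first exact: (is_vderiv_dot t HD HD).
by rewrite (dotC (D t)) dot_jmapxx // addr0.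
Qed.

Definition jrot k x s : 'rV[R]_5 := cos (k * s) *: x + (sin (k * s) / k) *: j x.

Lemma jrot0 k x : jrot k x 0 = x.
Proof. by rewrite /jrot mulr0 cos0 sin0 mul0r scale1r scale0r addr0. Qed.

Lemma eigcomp_jrot k x s : eig k x -> eig k (jrot k x s).
Proof.
move=> Ex; rewrite /eigcomp /jrot !(jmapD, jmapZ) (eigcomp_jmap Ex) Ex.
by rewrite scalerDr !scalerA mulrC [_ * (sin _ / _)]mulrC.
Qed.

Lemma is_vderiv_jrot k x : k != 0 -> eig k x ->
  is_vderiv (jrot k x) (fun s => j (jrot k x s)).
Proof.
move=> k0 Ex.
have Hs (t : R) : is_derive t 1 (fun s => sin (k * s) / k) (cos (k * t) * k / k).
  have := is_derive_mul (is_derive_sin_scale k t) (is_derive_cst k^-1 t 1).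
  by move/is_derive_eq; apply; rewrite mulr0 addr0.
apply: is_vderiv_eq.
  exact: is_vderivD (is_vderivZ (is_derive_cos_scale k) (is_vderiv_cst x))
                    (is_vderivZ Hs (is_vderiv_cst (j x))).
move=> t; rewrite /jrot jmapD !jmapZ Ex.
by apply/rowP => u; rewrite !mxE; field.
Qed.

Lemma jrot_period k x tau : cos (k * tau) = 1 -> jrot k x tau = x.
Proof.
move=> c1; have /eqP : sin (k * tau) ^+ 2 = 0 by rewrite sin2cos2 c1 expr1n subrr.
by rewrite expf_eq0 /= => /eqP s0; rewrite /jrot c1 s0 mul0r scale0r scale1r addr0.
Qed.

Lemma jrot_closed_cos k l x y tau : k ^+ 2 != l ^+ 2 -> eig k x -> eig l y -> x != 0 ->
  jrot k x tau + jrot l y tau = x + y -> cos (k * tau) = 1.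
Proof.
move=> kl Ex Ey x0 /(congr1 (fun w => dot w x)) /=.
have xy w : eig l w -> dot w x = 0 by move=> Ew; rewrite (dot_eigcomp _ Ew Ex) // eq_sym.
rewrite dotDl [dot (x + y) x]dotDl /jrot dotDl [dot (_ + _) x]dotDl !dotZl.
rewrite dot_jmapxx // (xy y Ey) (xy (j y) (eigcomp_jmap Ey)) !mulr0 !addr0.
by rewrite -[RHS]mul1r => /mulIf; apply; rewrite dotxx_eq0.
Qed.
End SkewFlow.

Section Geodesic.
Variables (R : realType) (bb : 'I_5 -> 'I_5 -> 'rV[R]_3).
Hypothesis bbC : forall a b, bb a b = - bb b a.
Variable Z : 'rV[R]_3.
Local Notation br := (brOf bb).
Local Notation j := (jmap br Z).
Local Notation eig := (eigcomp br Z).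
Variables (gv : R -> 'rV[R]_5) (gz : R -> 'rV[R]_3).
Local Notation A s := (ltv br gv gz s).1.

Lemma geodesic_equations : geodesic br gv gz -> (ltv br gv gz 0).2 = Z ->
  [/\ is_vderiv (fun s => A s) (fun s => j (A s)),
      is_vderiv gv (fun s => A s) &
      is_vderiv gz (fun s => Z + 2^-1 *: br (gv s) (A s))].
Proof.
case=> C1v C1z C1a C1b Heq A0.
have dA t : dcurve (fun s => A s) t = jmap br (ltv br gv gz t).2 (A t)
            /\ dcurve (fun s => (ltv br gv gz s).2) t = 0.
  have := Heq t; rewrite [nabla _ _ _](nabla_diag bbC) /nadd => -[e1 e2].
  by split; [apply/eqP; rewrite -subr_eq0 e1 | rewrite -e2 addr0].
have A2 s : (ltv br gv gz s).2 = Z.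
  rewrite -A0; apply: (@is_vderiv0_cst _ _ (fun s => (ltv br gv gz s).2)).
  exact: is_vderiv_eq (C1curve_vderiv C1b) (fun t => (dA t).2).
split.
- by apply: is_vderiv_eq (C1curve_vderiv C1a) _ => t; rewrite (dA t).1 A2.
- exact: C1curve_vderiv C1v.
- apply: is_vderiv_eq (C1curve_vderiv C1z) _ => t.
  by rewrite -(A2 t) /= subrK.
Qed.
End Geodesic.

Section Integration.
Variables (R : realType) (bb : 'I_5 -> 'I_5 -> 'rV[R]_3).
Hypothesis bbC : forall a b, bb a b = - bb b a.
Variable Z : 'rV[R]_3.
Local Notation br := (brOf bb).
Local Notation j := (jmap br Z).
Local Notation eig := (eigcomp br Z).
Implicit Types (k : R) (x : 'rV[R]_5).

Definition jprim k x : 'rV[R]_5 := - k ^- 2 *: j x.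

Lemma is_vderiv_jprim k (f df : R -> 'rV[R]_5) : is_vderiv f df ->
  is_vderiv (fun s => jprim k (f s)) (fun s => jprim k (df s)).
Proof. by move=> Hf; apply: is_vderivZr; apply: is_vderiv_jmap. Qed.

Lemma is_vderiv_jprim_jrot k x : k != 0 -> eig k x ->
  is_vderiv (fun s => jprim k (jrot bb Z k x s)) (jrot bb Z k x).
Proof.
move=> k0 Ex; apply: is_vderiv_eq; first exact: is_vderiv_jprim (is_vderiv_jrot k0 Ex).
move=> t /=; rewrite /jprim (eigcomp_jrot t Ex) scalerA.
by rewrite mulrNN mulVf ?expf_neq0 // scale1r.
Qed.

Lemma brOf_jprim_jrot k x s : k != 0 -> eig k x ->
  br (jprim k (jrot bb Z k x s)) (jrot bb Z k x s) = br (jprim k x) x.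
Proof.
move=> k0 Ex; rewrite -{3 4}(jrot0 bb Z k x).
apply: (@is_vderiv0_cst _ _ (fun s => br (jprim k (jrot bb Z k x s)) (jrot bb Z k x s))).
apply: is_vderiv_eq.
  exact: is_vderiv_br (is_vderiv_jprim_jrot k0 Ex) (is_vderiv_jrot k0 Ex).
by move=> t /=; rewrite brOfxx // /jprim brOfZl brOfxx // scaler0 add0r.
Qed.

Variables (k1 k2 : R) (V1 V2 V0 : 'rV[R]_5).
Hypotheses (k1n0 : k1 != 0) (k2n0 : k2 != 0) (k12 : k1 ^+ 2 != k2 ^+ 2).
Hypotheses (E1 : eig k1 V1) (E2 : eig k2 V2) (E0 : eig 0 V0).
Local Notation w1 := (jrot bb Z k1 V1).
Local Notation w2 := (jrot bb Z k2 V2).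

Lemma skew_flow_jrot (A : R -> 'rV[R]_5) : is_vderiv A (fun s => j (A s)) ->
  A 0 = V1 + V2 + V0 -> forall s, A s = w1 s + w2 s + V0.
Proof.
move=> HA A0 s; apply/eqP; rewrite -subr_eq0; apply/eqP; move: s.
apply: (skew_flow_eq0 (Z := Z) bbC); last by rewrite A0 !jrot0 subrr.
apply: is_vderiv_eq.
  exact: is_vderivB HA (is_vderivD (is_vderivD (is_vderiv_jrot k1n0 E1)
                          (is_vderiv_jrot k2n0 E2)) (is_vderiv_cst V0)).
by move=> t /=; rewrite addr0 jmapB !jmapD (eigcomp0_jmap bbC E0) addr0.
Qed.

Local Notation P s := (jprim k1 (w1 s) + jprim k2 (w2 s)).

Lemma is_vderiv_jprim_sum : is_vderiv (fun s => P s) (fun s => w1 s + w2 s).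
Proof. exact: is_vderivD (is_vderiv_jprim_jrot k1n0 E1) (is_vderiv_jprim_jrot k2n0 E2). Qed.

Lemma position_jrot (gv : R -> 'rV[R]_5) : is_vderiv gv (fun s => w1 s + w2 s + V0) ->
  forall s, gv s = gv 0 - P 0 + s *: V0 + P s.
Proof.
move=> Hgv s.
have Hc : is_vderiv (fun s => gv s - (s *: V0 + P s)) (fun _ => 0).
  apply: is_vderiv_eq.
    exact: is_vderivB Hgv (is_vderivD (is_vderiv_line V0) is_vderiv_jprim_sum).
  by move=> t /=; rewrite [V0 + _]addrC addrA subrr.
have /= := is_vderiv0_cst Hc s.
by rewrite scale0r add0r => /eqP; rewrite subr_eq => /eqP ->; rewrite addrA.
Qed.

(* Found by differentiating [br w1 w2] and [br (j w1) (j w2)] along the flow, where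
   [j (j wi) = - ki ^+ 2 *: wi], and solving for the two mixed brackets. *)
Definition mixed_prim s := (k2 ^+ 2 - k1 ^+ 2)^-1 *:
  (2 *: br (w1 s) (w2 s) + (k1 ^- 2 + k2 ^- 2) *: br (j (w1 s)) (j (w2 s))).

Lemma is_vderiv_mixed_prim :
  is_vderiv mixed_prim (fun s => br (jprim k1 (w1 s)) (w2 s) + br (jprim k2 (w2 s)) (w1 s)).
Proof.
have Hw1 := is_vderiv_jrot k1n0 E1; have Hw2 := is_vderiv_jrot k2n0 E2.
apply: is_vderiv_eq.
  apply: is_vderivZr; apply: is_vderivD; apply: is_vderivZr; apply: is_vderiv_br.
  - exact: Hw1.
  - exact: Hw2.
  - exact: is_vderiv_jmap Hw1.
  - exact: is_vderiv_jmap Hw2.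
move=> t /=; rewrite (eigcomp_jrot t E1) (eigcomp_jrot t E2) /jprim.
rewrite !brOfZl !brOfZr (brOfC bbC (j (w2 t))).
have k12' : k2 ^+ 2 - k1 ^+ 2 != 0 by rewrite subr_eq0 eq_sym.
by apply/rowP => u; rewrite !mxE; field; rewrite k12' k1n0 k2n0.
Qed.

Local Notation Q s := (jprim k1 (jprim k1 (w1 s)) + jprim k2 (jprim k2 (w2 s))).
Local Notation C := (br (jprim k1 V1) V1 + br (jprim k2 V2) V2).

Definition central_prim kappa s := br kappa (s *: V0 + P s) + s *: br V0 (P s)
  + 2 *: br (Q s) V0 + s *: C + mixed_prim s.

Lemma is_vderiv_central_prim kappa :
  is_vderiv (central_prim kappa) (fun s => br (kappa + s *: V0 + P s) (w1 s + w2 s + V0)).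
Proof.
have HP := is_vderiv_jprim_sum.
have HQ : is_vderiv (fun s => Q s) (fun s => P s).
  exact: is_vderivD (is_vderiv_jprim k1 (is_vderiv_jprim_jrot k1n0 E1))
                    (is_vderiv_jprim k2 (is_vderiv_jprim_jrot k2n0 E2)).
rewrite /central_prim; apply: is_vderiv_eq.
  apply: (is_vderivD _ is_vderiv_mixed_prim); apply: (is_vderivD _ (is_vderiv_line C)).
  apply: is_vderivD; last by apply: is_vderivZr; exact: is_vderiv_br HQ (is_vderiv_cst V0).
  apply: is_vderivD.
    exact: is_vderiv_br (is_vderiv_cst kappa) (is_vderivD (is_vderiv_line V0) HP).
  apply: (@is_vderiv_idZ _ _ (fun s => br V0 (P s))).
  exact: is_vderiv_br (is_vderiv_cst V0) HP.
(* Everything is generalized first, so that rewriting with bilinearity cannot unfold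
   [jrot] or [jprim]. *)
move=> t /=; have := brOf_jprim_jrot t k1n0 E1; have := brOf_jprim_jrot t k2n0 E2.
move: (br (jprim k1 V1) V1) (br (jprim k2 V2) V2) => c1 c2 e2 e1.
move: e1 e2 (jprim k1 (jprim k1 (w1 t))) (jprim k2 (jprim k2 (w2 t))).
move: (w1 t) (w2 t) (jprim k1 (w1 t)) (jprim k2 (w2 t)) => a1 a2 p1 p2 e1 e2 q1 q2.
rewrite !brOf0l !brOf0r !(brOfDl, brOfDr, brOfZl, brOfZr) e1 e2 brOfxx //.
rewrite !(brOfC bbC V0 p1) !(brOfC bbC V0 p2).
by apply/rowP => u; rewrite !mxE; ring.
Qed.

Lemma position_central (gv : R -> 'rV[R]_5) (gz : R -> 'rV[R]_3) :
  (forall s, gv s = gv 0 - P 0 + s *: V0 + P s) ->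
  is_vderiv gz (fun s => Z + 2^-1 *: br (gv s) (w1 s + w2 s + V0)) ->
  forall s, gz s = gz 0 + s *: Z
    + 2^-1 *: (central_prim (gv 0 - P 0) s - central_prim (gv 0 - P 0) 0).
Proof.
move=> Hgv dgz s.
have Hc : is_vderiv (fun s => gz s - s *: Z - 2^-1 *: central_prim (gv 0 - P 0) s) (fun _ => 0).
  apply: is_vderiv_eq.
    exact: is_vderivB (is_vderivB dgz (is_vderiv_line Z))
                      (is_vderivZr _ (is_vderiv_central_prim _)).
  by move=> t /=; rewrite (Hgv t) addrAC addrK subrr.
have := is_vderiv0_cst Hc s; rewrite /= scale0r subr0.
move: (gz s) (gz 0) (central_prim _ s) (central_prim _ 0) => a b c d /rowP e.
by apply/rowP => u; have := e u; rewrite !mxE => e'; lra.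
Qed.

Theorem geodesic_translation gv gz tau : V1 != 0 -> V2 != 0 -> geodesic br gv gz ->
  ltv br gv gz 0 = (V1 + V2 + V0, Z) -> (ltv br gv gz tau).1 = V1 + V2 + V0 ->
  [/\ cos (k1 * tau) = 1, cos (k2 * tau) = 1 &
     gmul br (gv tau, gz tau) (ginv (gv 0, gz 0)) =
     (tau *: V0, tau *: (Z + br (gv 0 - (jprim k1 V1 + jprim k2 V2)) V0 + 2^-1 *: C))].
Proof.
move=> nV1 nV2 Hgeo A0 At.
have A02 : (ltv br gv gz 0).2 = Z by rewrite A0.
have [dA dgv dgz] := geodesic_equations bbC Hgeo A02.
have HA := skew_flow_jrot dA (congr1 fst A0).
have Hw : w1 tau + w2 tau = V1 + V2 by apply: (addIr V0); rewrite -HA At.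
have c1 : cos (k1 * tau) = 1 := jrot_closed_cos bbC k12 E1 E2 nV1 Hw.
have c2 : cos (k2 * tau) = 1.
  apply: (jrot_closed_cos bbC _ E2 E1 nV2); first by rewrite eq_sym.
  by rewrite addrC Hw addrC.
have Hgv := position_jrot (is_vderiv_eq dgv HA).
have dgz' : is_vderiv gz (fun s => Z + 2^-1 *: br (gv s) (w1 s + w2 s + V0)).
  by apply: is_vderiv_eq dgz _ => t /=; rewrite [dcurve gv t](HA t).
have Hgz := position_central Hgv dgz'.
have w1t : w1 tau = w1 0 by rewrite (jrot_period bb Z V1 c1) jrot0.
have w2t : w2 tau = w2 0 by rewrite (jrot_period bb Z V2 c2) jrot0.
have mixedt : mixed_prim tau = mixed_prim 0 by rewrite /mixed_prim w1t w2t.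
split => //; rewrite /gmul /ginv /= (Hgz tau) (Hgv tau) /central_prim mixedt w1t w2t !jrot0.
move: (gv 0) (gz 0) (jprim k1 V1 + jprim k2 V2) (mixed_prim 0)
  (jprim k1 (jprim k1 V1) + jprim k2 (jprim k2 V2)) C => g0 z0 p f q c.
rewrite !(brOfDl, brOfDr, brOfZl, brOfZr, brOfNl, brOfNr) !brOfxx // !(brOfC bbC V0).
by congr pair; apply/rowP => u; rewrite !mxE; field.
Qed.
End Integration.

Section Coordinates.
Variable R : realType.

Definition v5 (a b c d e : R) : 'rV[R]_5 := \row_(u < 5) nth 0 [:: a; b; c; d; e] u.
Definition v3 (a b c : R) : 'rV[R]_3 := \row_(u < 3) nth 0 [:: a; b; c] u.

Lemma v5D a b c d e a' b' c' d' e' :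
  v5 a b c d e + v5 a' b' c' d' e' = v5 (a + a') (b + b') (c + c') (d + d') (e + e').
Proof. by apply/rowP => -[[|[|[|[|[|?]]]]] ?]; rewrite !mxE. Qed.
Lemma v5Z k a b c d e : k *: v5 a b c d e = v5 (k * a) (k * b) (k * c) (k * d) (k * e).
Proof. by apply/rowP => -[[|[|[|[|[|?]]]]] ?]; rewrite !mxE. Qed.
Lemma v5N a b c d e : - v5 a b c d e = v5 (- a) (- b) (- c) (- d) (- e).
Proof. by apply/rowP => -[[|[|[|[|[|?]]]]] ?]; rewrite !mxE //= oppr0. Qed.
Lemma v3D a b c a' b' c' : v3 a b c + v3 a' b' c' = v3 (a + a') (b + b') (c + c').
Proof. by apply/rowP => -[[|[|[|?]]] ?]; rewrite !mxE. Qed.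
Lemma v3Z k a b c : k *: v3 a b c = v3 (k * a) (k * b) (k * c).
Proof. by apply/rowP => -[[|[|[|?]]] ?]; rewrite !mxE. Qed.
Lemma v3N a b c : - v3 a b c = v3 (- a) (- b) (- c).
Proof. by apply/rowP => -[[|[|[|?]]] ?]; rewrite !mxE //= oppr0. Qed.

Lemma delta5 (k : 'I_5) : delta_mx 0 k = v5 (k == 0 :> nat)%:R (k == 1 :> nat)%:R
   (k == 2 :> nat)%:R (k == 3 :> nat)%:R (k == 4 :> nat)%:R.
Proof.
by apply/rowP => -[[|[|[|[|[|?]]]]] ?]; rewrite !mxE //= -val_eqE /= ?[_ == k :> nat]eq_sym.
Qed.
Lemma delta3 (k : 'I_3) : delta_mx 0 k = v3 (k == 0 :> nat)%:R (k == 1 :> nat)%:R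
   (k == 2 :> nat)%:R.
Proof. by apply/rowP => -[[|[|[|?]]] ?]; rewrite !mxE //= -val_eqE /= ?[_ == k :> nat]eq_sym. Qed.

Lemma XiE : Xi = v5 1 0 0 0 0. Proof. by rewrite /Xi delta5 inordK. Qed.
Lemma XjE : Xj = v5 0 1 0 0 0. Proof. by rewrite /Xj delta5 inordK. Qed.
Lemma YiE : Yi = v5 0 0 1 0 0. Proof. by rewrite /Yi delta5 inordK. Qed.
Lemma YjE : Yj = v5 0 0 0 1 0. Proof. by rewrite /Yj delta5 inordK. Qed.
Lemma YkE : Yk = v5 0 0 0 0 1. Proof. by rewrite /Yk delta5 inordK. Qed.
Lemma ZiE : Zi = v3 1 0 0. Proof. by rewrite /Zi delta3 inordK. Qed.
Lemma ZjE : Zj = v3 0 1 0. Proof. by rewrite /Zj delta3 inordK. Qed.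
Lemma ZkE : Zk = v3 0 0 1. Proof. by rewrite /Zk delta3 inordK. Qed.

Lemma dot5 a b c d e a' b' c' d' e' :
  dot (v5 a b c d e) (v5 a' b' c' d' e') = a * a' + b * b' + c * c' + d * d' + e * e'.
Proof. by rewrite /dot !big_ord_recl big_ord0 !mxE /=; ring. Qed.
Lemma dot3 a b c a' b' c' : dot (v3 a b c) (v3 a' b' c') = a * a' + b * b' + c * c'.
Proof. by rewrite /dot !big_ord_recl big_ord0 !mxE /=; ring. Qed.

Lemma brN5 a b c d e a' b' c' d' e' : brN (v5 a b c d e) (v5 a' b' c' d' e') =
  v3 (b * e' - e * b') (e * a' - a * e') (a * d' - d * a' - (b * c' - c * b')).
Proof.
rewrite /brN /brOf !big_ord_recl !big_ord0 /= !mxE /bbN /= ZiE ZjE ZkE.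
by rewrite ?scaler0 ?add0r ?addr0 !v3N !v3Z !v3D; congr v3; ring.
Qed.
Lemma brN'5 a b c d e a' b' c' d' e' : brN' (v5 a b c d e) (v5 a' b' c' d' e') =
  v3 (d * e' - e * d') (e * c' - c * e') (a * b' - b * a' + (c * d' - d * c')).
Proof.
rewrite /brN' /brOf !big_ord_recl !big_ord0 /= !mxE /bbN' /= ZiE ZjE ZkE.
by rewrite ?scaler0 ?add0r ?addr0 !v3N !v3Z !v3D; congr v3; ring.
Qed.

Lemma jN5 a b c x0 x1 x2 x3 x4 : jmap brN (v3 a b c) (v5 x0 x1 x2 x3 x4) =
  v5 (b * x4 - c * x3) (c * x2 - a * x4) (- (c * x1)) (c * x0) (a * x1 - b * x0).
Proof.
by apply/rowP => -[[|[|[|[|[|?]]]]] ?]; rewrite !mxE delta5 /= brN5 dot3 ?nth_nil; ring.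
Qed.
Lemma jN'5 a b c x0 x1 x2 x3 x4 : jmap brN' (v3 a b c) (v5 x0 x1 x2 x3 x4) =
  v5 (- (c * x1)) (c * x0) (b * x4 - c * x3) (c * x2 - a * x4) (a * x3 - b * x2).
Proof.
by apply/rowP => -[[|[|[|[|[|?]]]]] ?]; rewrite !mxE delta5 /= brN'5 dot3 ?nth_nil; ring.
Qed.
End Coordinates.

Ltac vnorm := rewrite ?(v5Z, v5N, v5D, v3Z, v3N, v3D).

Section Frames.
Variables (R : realType) (ci cj ck : R).
Local Notation n := (cnorm ci cj ck).
Local Notation Z := (Zc ci cj ck).

Lemma bbN_antisym (a b : 'I_5) : bbN a b = - bbN b a :> 'rV[R]_3.
Proof.
by case: a b => [[|[|[|[|[|?]]]]] ?] [[|[|[|[|[|?]]]]] ?]; rewrite /bbN /= ?opprK ?oppr0.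
Qed.
Lemma bbN'_antisym (a b : 'I_5) : bbN' a b = - bbN' b a :> 'rV[R]_3.
Proof.
by case: a b => [[|[|[|[|[|?]]]]] ?] [[|[|[|[|[|?]]]]] ?]; rewrite /bbN' /= ?opprK ?oppr0.
Qed.

Lemma ZcE : Z = v3 ci cj ck.
Proof. by rewrite /Zc ZiE ZjE ZkE; vnorm; congr v3; ring. Qed.

Lemma cnorm_sqr : n ^+ 2 = ci ^+ 2 + cj ^+ 2 + ck ^+ 2.
Proof. by rewrite sqr_sqrtr // !addr_ge0 ?sqr_ge0. Qed.

Lemma eigcompN_E12 a1 a2 : eigcomp brN Z ck (a1 *: E1 ci cj ck + a2 *: E2 ci cj ck).
Proof.
by rewrite /eigcomp ZcE /E1 /E2 XiE XjE YiE YjE; vnorm; rewrite !jN5; vnorm; congr v5; ring.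
Qed.
Lemma eigcompN_E34 a3 a4 : eigcomp brN Z n (a3 *: E3 ci cj ck + a4 *: E4 ci cj ck).
Proof.
rewrite /eigcomp cnorm_sqr ZcE /E3 /E4 XiE XjE YiE YjE YkE; vnorm; rewrite !jN5; vnorm.
by congr v5; ring.
Qed.
Lemma eigcompN'_E12 a1 a2 : eigcomp brN' Z ck (a1 *: E1' ci cj ck + a2 *: E2' ci cj ck).
Proof.
by rewrite /eigcomp ZcE /E1' /E2' XiE XjE; vnorm; rewrite !jN'5; vnorm; congr v5; ring.
Qed.
Lemma eigcompN'_E34 a3 a4 : eigcomp brN' Z n (a3 *: E3' ci cj ck + a4 *: E4' ci cj ck).
Proof.
rewrite /eigcomp cnorm_sqr ZcE /E3' /E4' YiE YjE YkE; vnorm; rewrite !jN'5; vnorm.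
by congr v5; ring.
Qed.
End Frames.

Section TranslationValue.
Variables (R : realType) (ci cj ck : R).
Local Notation n := (cnorm ci cj ck).
Local Notation Z := (Zc ci cj ck).
Variables (Vck Vc V0 v : 'rV[R]_5) (tau beta a1 a2 a3 a4 xi xj yi yj yk : R).
Hypotheses (ck0 : ck != 0) (s0 : ci ^+ 2 + cj ^+ 2 != 0).
Hypotheses (HV0 : V0 = beta *: YZ ci cj ck)
  (Hv : v = xi *: Xi + xj *: Xj + yi *: Yi + yj *: Yj + yk *: Yk).

Lemma N2_neq0 : ci ^+ 2 + cj ^+ 2 + ck ^+ 2 != 0.
Proof. by rewrite paddr_eq0 ?addr_ge0 ?sqr_ge0 // sqrf_eq0 (negPf ck0) andbF. Qed.

Lemma translationN_value :
  Vck = a1 *: E1 ci cj ck + a2 *: E2 ci cj ck ->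
  Vc = a3 *: E3 ci cj ck + a4 *: E4 ci cj ck ->
  tau *: (Z + brN (v - (jprim bbN Z ck Vck + jprim bbN Z n Vc)) V0
          + 2^-1 *: (brN (jprim bbN Z ck Vck) Vck + brN (jprim bbN Z n Vc) Vc)) =
  (tau * (1 + dot (Vck + Vc) (Vck + Vc) / (2 * n ^+ 2))) *: Z
  + (tau * beta * (a2 - ck / (ci ^+ 2 + cj ^+ 2) * (xi * ci + xj * cj)))
      *: (- cj *: Zi + ci *: Zj)
  + (tau * (- (dot Vck Vck) / (2 * ck * n ^+ 2)
            + beta * (a4 - 1 / (ci ^+ 2 + cj ^+ 2) * (xi * cj - xj * ci))))
      *: (ck *: (ci *: Zi + cj *: Zj) - (ci ^+ 2 + cj ^+ 2) *: Zk).
Proof.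
move=> -> ->; rewrite HV0 Hv /jprim /E3 [a3 *: (_ *: _)]scalerA cnorm_sqr.
(* Once [n ^+ 2] is replaced by its value, [n] only occurs in [a3 * n], so [field]
   needs no fact about the square root. *)
move: (a3 * n) => b3.
rewrite ZcE /E1 /E2 /E4 /YZ XiE XjE YiE YjE YkE ZiE ZjE ZkE; vnorm.
rewrite !jN5; vnorm; rewrite !brN5 !dot5; vnorm.
have N0 := N2_neq0.
by congr v3; field; rewrite ?ck0 ?s0 ?N0.
Qed.

Lemma translationN'_value :
  Vck = a1 *: E1' ci cj ck + a2 *: E2' ci cj ck ->
  Vc = a3 *: E3' ci cj ck + a4 *: E4' ci cj ck ->
  tau *: (Z + brN' (v - (jprim bbN' Z ck Vck + jprim bbN' Z n Vc)) V0
          + 2^-1 *: (brN' (jprim bbN' Z ck Vck) Vck + brN' (jprim bbN' Z n Vc) Vc)) =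
  (tau * (1 + dot (Vck + Vc) (Vck + Vc) / (2 * n ^+ 2))) *: Z
  + (tau * beta * (- n * a3 + yk - ck / (ci ^+ 2 + cj ^+ 2) * (yi * ci + yj * cj)))
      *: (- cj *: Zi + ci *: Zj)
  + (tau * (- (dot Vck Vck) / (2 * ck * n ^+ 2)
            + beta * (a4 - 1 / (ci ^+ 2 + cj ^+ 2) * (yi * cj - yj * ci))))
      *: (ck *: (ci *: Zi + cj *: Zj) - (ci ^+ 2 + cj ^+ 2) *: Zk).
Proof.
move=> -> ->; rewrite HV0 Hv /jprim /E3' [a3 *: (_ *: _)]scalerA cnorm_sqr.
rewrite mulNr [n * a3]mulrC.
move: (a3 * n) => b3.
rewrite ZcE /E1' /E2' /E4' /YZ XiE XjE YiE YjE YkE ZiE ZjE ZkE; vnorm.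
rewrite !jN'5; vnorm; rewrite !brN'5 !dot5; vnorm.
have N0 := N2_neq0.
by congr v3; field; rewrite ?ck0 ?s0 ?N0.
Qed.
End TranslationValue.

Lemma cosB_2piZ (R : realType) (x : R) (k : int) : cos (x - 2 * pi * k%:~R) = cos x.
Proof.
have P := periodicn (@cosD2pi R); have E : (2 : R) * pi = pi *+ 2 by rewrite mulr_natl.
case: k => m; last by rewrite NegzE mulrN opprK E mulr_natr P.
by rewrite E (_ : (Posz m)%:~R = m%:R :> R) // mulr_natr -(P m (x - _)) subrK.
Qed.

Lemma cos_eq1_2piZ (R : realType) (x : R) : cos x = 1 -> exists n : int, x = 2 * pi * n%:~R.
Proof.
move=> cx; have pi2 : (0 : R) < 2 * pi by rewrite mulr_gt0 ?pi_gt0.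
exists (Num.floor (x / (2 * pi))); set m := Num.floor _; set y := x - 2 * pi * m%:~R.
have cy : cos y = 1 by rewrite cosB_2piZ.
have y0 : 0 <= y.
  by have := Num.Theory.floor_le (x / (2 * pi)); rewrite -/m ler_pdivlMr // /y => h; lra.
have y2pi : y < 2 * pi.
  have := floorD1_gt (x / (2 * pi)); rewrite -/m ltr_pdivrMr // intrD mulrDl mul1r /y => h; lra.
suff : y = 0 by move=> /eqP; rewrite subr_eq0 => /eqP.
have [ypi|piy] := lerP y pi.
  by apply: cos_inj; rewrite ?in_itv /= ?y0 ?ypi ?lexx ?pi_ge0 // cy cos0.
have : 2 * pi - y = 0.
  apply: cos_inj; rewrite ?in_itv /= ?lexx ?pi_ge0 //; first by apply/andP; split; lra.
  by rewrite cos0 -cosN opprB mulr_natl -(cosD2pi (y - pi *+ 2)) subrK cy.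
lra.
Qed.

Lemma genericity_cnorm (R : realType) (ci cj ck : R) :
  `|ck| < cnorm ci cj ck -> 0 < `|ck| ->
  [/\ ck != 0, cnorm ci cj ck != 0, ck ^+ 2 != cnorm ci cj ck ^+ 2
    & ci ^+ 2 + cj ^+ 2 != 0].
Proof.
move=> ltn gt0; have sq : ck ^+ 2 < cnorm ci cj ck ^+ 2.
  by rewrite -real_normK ?num_real // ltr_pXn2r // ?nnegrE ?normr_ge0 ?sqrtr_ge0.
split; first by rewrite -normr_gt0.
- by rewrite gt_eqF // (lt_trans gt0 ltn).
- by rewrite lt_eqF.
- by move: sq; rewrite cnorm_sqr -subr_gt0 addrK => /gt_eqF ->.
Qed.

Theorem lemma5p4 (R : realType) :
  (* case of N *)
  (forall (ci cj ck : R) (V Vck Vc V0 : 'rV[R]_5)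
     (gv : R -> 'rV[R]_5) (gz : R -> 'rV[R]_3) (z : 'rV[R]_3) (v : 'rV[R]_5)
     (tau beta a1 a2 a3 a4 xi xj yi yj yk : R),
   `|ck| < cnorm ci cj ck -> 0 < `|ck| ->
   V = Vck + Vc + V0 ->
   eigcomp brN (Zc ci cj ck) ck Vck -> eigcomp brN (Zc ci cj ck) (cnorm ci cj ck) Vc ->
   eigcomp brN (Zc ci cj ck) 0 V0 ->
   Vck != 0 -> Vc != 0 -> V0 != 0 ->
   geodesic brN gv gz ->
   (gv 0, gz 0) = (v, z) -> ltv brN gv gz 0 = (V, Zc ci cj ck) ->
   0 < tau -> ltv brN gv gz tau = (V, Zc ci cj ck) ->
   V0 = beta *: YZ ci cj ck ->
   Vck + Vc = a1 *: E1 ci cj ck + a2 *: E2 ci cj ck + a3 *: E3 ci cj ck + a4 *: E4 ci cj ck ->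
   v = xi *: Xi + xj *: Xj + yi *: Yi + yj *: Yj + yk *: Yk ->
   [/\ exists n : int, tau * ck = 2 * pi * n%:~R,
       exists n : int, tau * cnorm ci cj ck = 2 * pi * n%:~R &
       gmul brN (gv tau, gz tau) (ginv (gv 0, gz 0)) =
       (tau *: V0,
        (tau * (1 + dot (Vck + Vc) (Vck + Vc) / (2 * cnorm ci cj ck ^+ 2))) *: Zc ci cj ck
        + (tau * beta * (a2 - ck / (ci ^+ 2 + cj ^+ 2) * (xi * ci + xj * cj)))
            *: (- cj *: Zi + ci *: Zj)
        + (tau * (- (dot Vck Vck) / (2 * ck * cnorm ci cj ck ^+ 2)
                  + beta * (a4 - 1 / (ci ^+ 2 + cj ^+ 2) * (xi * cj - xj * ci))))
            *: (ck *: (ci *: Zi + cj *: Zj) - (ci ^+ 2 + cj ^+ 2) *: Zk))])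
  /\
  (* case of N' *)
  (forall (ci cj ck : R) (V Vck Vc V0 : 'rV[R]_5)
     (gv : R -> 'rV[R]_5) (gz : R -> 'rV[R]_3) (z : 'rV[R]_3) (v : 'rV[R]_5)
     (tau beta a1 a2 a3 a4 xi xj yi yj yk : R),
   `|ck| < cnorm ci cj ck -> 0 < `|ck| ->
   V = Vck + Vc + V0 ->
   eigcomp brN' (Zc ci cj ck) ck Vck -> eigcomp brN' (Zc ci cj ck) (cnorm ci cj ck) Vc ->
   eigcomp brN' (Zc ci cj ck) 0 V0 ->
   Vck != 0 -> Vc != 0 -> V0 != 0 ->
   geodesic brN' gv gz ->
   (gv 0, gz 0) = (v, z) -> ltv brN' gv gz 0 = (V, Zc ci cj ck) ->
   0 < tau -> ltv brN' gv gz tau = (V, Zc ci cj ck) ->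
   V0 = beta *: YZ ci cj ck ->
   Vck + Vc = a1 *: E1' ci cj ck + a2 *: E2' ci cj ck + a3 *: E3' ci cj ck + a4 *: E4' ci cj ck ->
   v = xi *: Xi + xj *: Xj + yi *: Yi + yj *: Yj + yk *: Yk ->
   [/\ exists n : int, tau * ck = 2 * pi * n%:~R,
       exists n : int, tau * cnorm ci cj ck = 2 * pi * n%:~R &
       gmul brN' (gv tau, gz tau) (ginv (gv 0, gz 0)) =
       (tau *: V0,
        (tau * (1 + dot (Vck + Vc) (Vck + Vc) / (2 * cnorm ci cj ck ^+ 2))) *: Zc ci cj ck
        + (tau * beta * (- cnorm ci cj ck * a3 + yk
                         - ck / (ci ^+ 2 + cj ^+ 2) * (yi * ci + yj * cj)))
            *: (- cj *: Zi + ci *: Zj)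
        + (tau * (- (dot Vck Vck) / (2 * ck * cnorm ci cj ck ^+ 2)
                  + beta * (a4 - 1 / (ci ^+ 2 + cj ^+ 2) * (yi * cj - yj * ci))))
            *: (ck *: (ci *: Zi + cj *: Zj) - (ci ^+ 2 + cj ^+ 2) *: Zk))]).
Proof.
split=> ci cj ck V Vck Vc V0 gv gz z v tau beta a1 a2 a3 a4 xi xj yi yj yk
  Hlt Hck HV EVck EVc EV0 nVck nVc nV0 Hgeo [gv0 _] HA0 _ HAt HV0 HVp Hv;
  have [ck0 n0 ckn s0] := genericity_cnorm Hlt Hck;
  rewrite HV in HA0 HAt; rewrite -addrA in HVp.
- have [c1 c2 ->] := geodesic_translation (@bbN_antisym R) ck0 n0 ckn EVck EVc EV0
    nVck nVc Hgeo HA0 (congr1 fst HAt).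
  have [EVck' EVc'] := eigcomp_split ckn EVck EVc
    (eigcompN_E12 _ _ _ a1 a2) (eigcompN_E34 _ _ _ a3 a4) HVp.
  split; [rewrite [tau * _]mulrC; exact: cos_eq1_2piZ c1
         |rewrite [tau * _]mulrC; exact: cos_eq1_2piZ c2 |].
  by rewrite gv0 (translationN_value _ ck0 s0 HV0 Hv EVck' EVc').
- have [c1 c2 ->] := geodesic_translation (@bbN'_antisym R) ck0 n0 ckn EVck EVc EV0
    nVck nVc Hgeo HA0 (congr1 fst HAt).
  have [EVck' EVc'] := eigcomp_split ckn EVck EVc
    (eigcompN'_E12 _ _ _ a1 a2) (eigcompN'_E34 _ _ _ a3 a4) HVp.
  split; [rewrite [tau * _]mulrC; exact: cos_eq1_2piZ c1
         |rewrite [tau * _]mulrC; exact: cos_eq1_2piZ c2 |].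
  by rewrite gv0 (translationN'_value _ ck0 s0 HV0 Hv EVck' EVc').
Qed.
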